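(* Let $M$ and $N$ be monoids with finite generating sets $X$ and $Y$ respectively, and suppose $(M,d_X)$ and $(N,d_Y)$ are quasi-isometric. Then $M$ (with respect to $X$) and $N$ (with respect to $Y$) have the same number of ends.
   Context: For a monoid $M$ generated by a finite set $X$, $d_X(x,y)=\inf\{|w|:w\in X^*,\ xw=y\}$ ($X^*$ the free monoid on $X$, $\inf\emptyset=\infty$). A map $f:(M,d_X)\to(N,d_Y)$ is a quasi-isometry if there are $1\le\lambda<\infty$, $0<\epsilon<\infty$, $0\le\mu<\infty$ with $\frac1\lambda d_X(x,y)-\epsilon\le d_Y(f(x),f(y))\le\lambda d_X(x,y)+\epsilon$ for all $x,y\in M$, and for every $n\in N$ some $x\in M$ with $\max(d_Y(n,f(x)),d_Y(f(x),n))\le\mu$. The right Cayley graph of $M$ with respect to $X$ is the directed graph with vertex set $M$ and an edge labelled $a$ from $m$ to $ma$ for each $m\in M$, $a\in X$. The number of ends of $M$ with respect to $X$ is the supremum, over all finite sets $F$ of vertices, of the number of infinite connected components of the graph obtained from the underlying undirected graph of the right Cayley graph by deleting $F$. *)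

From Stdlib Require Import Reals List Relations.
From Coquelicot Require Import Coquelicot.
Open Scope R_scope.

Record monoid := Monoid {
  mcarrier :> Type;
  mop : mcarrier -> mcarrier -> mcarrier;
  munit : mcarrier;
  massoc : forall a b c, mop a (mop b c) = mop (mop a b) c;
  munit_l : forall a, mop munit a = a;
  munit_r : forall a, mop a munit = a
}.

Definition word_eval (M : monoid) (w : list M) : M :=
  fold_right (mop M) (munit M) w.

Definition word_over (M : monoid) (X : list M) (w : list M) : Prop :=
  forall a, In a w -> In a X.

Definition generates (M : monoid) (X : list M) : Prop :=
  forall m : M, exists w, word_over M X w /\ m = word_eval M w.

(* d_X(x,y) = inf { |w| : w ∈ X^*, x w = y }, with inf ∅ = +oo *)
Definition dist (M : monoid) (X : list M) (x y : M) : Rbar :=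
  Rbar_glb (fun r : Rbar => exists w, word_over M X w /\
              mop M x (word_eval M w) = y /\ r = Finite (INR (length w))).

Definition quasi_isometry (M N : monoid) (X : list M) (Y : list N)
  (f : M -> N) : Prop :=
  exists lam eps mu : R, 1 <= lam /\ 0 < eps /\ 0 <= mu /\
    (forall x y : M,
       Rbar_le (Rbar_minus (Rbar_mult (Finite (/ lam)) (dist M X x y)) (Finite eps))
               (dist N Y (f x) (f y)) /\
       Rbar_le (dist N Y (f x) (f y))
               (Rbar_plus (Rbar_mult (Finite lam) (dist M X x y)) (Finite eps))) /\
    (forall n : N, exists x : M,
       Rbar_le (dist N Y n (f x)) (Finite mu) /\ Rbar_le (dist N Y (f x) n) (Finite mu)).

Definition quasi_isometric (M N : monoid) (X : list M) (Y : list N) : Prop :=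
  exists f : M -> N, quasi_isometry M N X Y f.

(* underlying undirected graph of the right Cayley graph: u -- v iff
   v = u a or u = v a for some a ∈ X *)
Definition cayley_adj (M : monoid) (X : list M) (u v : M) : Prop :=
  exists a, In a X /\ (v = mop M u a \/ u = mop M v a).

Definition adj_minus (M : monoid) (X : list M) (F : list M) (u v : M) : Prop :=
  ~ In u F /\ ~ In v F /\ cayley_adj M X u v.

Definition conn_minus (M : monoid) (X : list M) (F : list M) (u v : M) : Prop :=
  ~ In u F /\ ~ In v F /\ clos_refl_trans M (adj_minus M X F) u v.

Definition infinite_component (M : monoid) (X : list M) (F : list M) (v : M) : Prop :=
  ~ In v F /\ ~ (exists l : list M, forall u, conn_minus M X F v u -> In u l).

Definition at_least_inf_components (M : monoid) (X : list M) (F : list M)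
  (k : nat) : Prop :=
  exists reps : nat -> M,
    (forall i, (i < k)%nat -> infinite_component M X F (reps i)) /\
    (forall i j, (i < k)%nat -> (j < k)%nat -> i <> j ->
       ~ conn_minus M X F (reps i) (reps j)).

Definition num_inf_components (M : monoid) (X : list M) (F : list M) : Rbar :=
  Rbar_lub (fun r : Rbar => exists k : nat,
              at_least_inf_components M X F k /\ r = Finite (INR k)).

Definition num_ends (M : monoid) (X : list M) : Rbar :=
  Rbar_lub (fun r : Rbar => exists F : list M, r = num_inf_components M X F).

(* A quasi-isometry f : M -> N has a quasi-inverse g, and f and g change the
   length of connecting words only by affine amounts.  Given k infinite
   components of the Cayley graph of M minus a finite set F, enlarge F to a
   ball E and let F' be a ball around f(F) in N.  Since X generates M, every
   component outside E meets the finite set of points adjacent to E, so each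
   infinite component outside F contains an infinite component outside E.
   Paths avoiding E are mapped by f to paths avoiding F', paths avoiding F' are
   mapped back by g to paths avoiding F, and u is joined to g(f u) outside F;
   as f is finite-to-one, the images are k distinct infinite components
   outside F'.  By symmetry the numbers of ends agree. *)

From Pilot Require Import Defs.
From Stdlib Require Import Reals List Relations Lia Lra Wf_nat Classical IndefiniteDescription.
From Coquelicot Require Import Coquelicot.

Definition near (M : monoid) (X : list M) (x y : M) (n : nat) : Prop :=
  exists w, word_over M X w /\ (length w <= n)%nat /\ mop M x (word_eval M w) = y.

Notation linked M X F := (clos_refl_trans _ (adj_minus M X F)).

Section Words.
Variables (M : monoid) (X : list M).

Lemma word_eval_app (w1 w2 : list M) :
  word_eval M (w1 ++ w2) = mop M (word_eval M w1) (word_eval M w2).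
Proof.
  induction w1 as [|a w1 IH]; simpl; [now rewrite munit_l|].
  now rewrite IH, massoc.
Qed.

Lemma near_le x y n m : near M X x y n -> (n <= m)%nat -> near M X x y m.
Proof. intros [w [Hw [Hn Hy]]] Hm. exists w; repeat split; auto; lia. Qed.

Lemma near_refl x : near M X x x 0.
Proof. exists nil; split; [intros a []|split; [simpl; lia|apply munit_r]]. Qed.

Lemma near_trans x y z n m :
  near M X x y n -> near M X y z m -> near M X x z (n + m).
Proof.
  intros [w1 [Hw1 [Hn Hy]]] [w2 [Hw2 [Hm Hz]]].
  exists (w1 ++ w2); repeat split.
  - intros a Ha; apply in_app_or in Ha; destruct Ha; auto.
  - rewrite length_app; lia.
  - now rewrite word_eval_app, massoc, Hy.
Qed.

Lemma near_gen x a : In a X -> near M X x (mop M x a) 1.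
Proof.
  intros Ha; exists (a :: nil); split; [now intros b [<-|[]]|].
  split; [simpl; lia|]. simpl; now rewrite munit_r.
Qed.

End Words.

Fixpoint words {A : Type} (X : list A) (n : nat) : list (list A) :=
  match n with
  | O => nil :: nil
  | S n => nil :: flat_map (fun a => map (cons a) (words X n)) X
  end.

Lemma In_words {A : Type} (X : list A) n w :
  In w (words X n) <-> (forall a, In a w -> In a X) /\ (length w <= n)%nat.
Proof.
  revert w; induction n as [|n IH]; intros w; simpl.
  - split; [intros [<-|[]]; split; [intros a []|simpl; lia]|].
    intros [_ Hl]; destruct w; simpl in *; [auto|lia].
  - split.
    + intros [<-|Hw]; [split; [intros a []|simpl; lia]|].
      apply in_flat_map in Hw; destruct Hw as [a [Ha Hw]].
      apply in_map_iff in Hw; destruct Hw as [w' [<- Hw']].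
      apply IH in Hw'; destruct Hw' as [HX Hl].
      split; [intros b [<-|Hb]; auto|simpl; lia].
    + intros [HX Hl]; destruct w as [|a w]; [now left|right].
      apply in_flat_map; exists a; split; [apply HX; now left|].
      apply in_map, IH; split; [intros b Hb; apply HX; now right|simpl in Hl; lia].
Qed.

Definition ball (M : monoid) (X : list M) (l : list M) (n : nat) : list M :=
  flat_map (fun z => map (fun w => mop M z (word_eval M w)) (words X n)) l.

Lemma In_ball M X l n y : In y (ball M X l n) <-> exists z, In z l /\ near M X z y n.
Proof.
  unfold ball; rewrite in_flat_map; split.
  - intros [z [Hz Hy]]; apply in_map_iff in Hy; destruct Hy as [w [<- Hw]].
    apply In_words in Hw; destruct Hw. exists z; split; auto. exists w; auto.
  - intros [z [Hz [w [Hw [Hl Hy]]]]]. exists z; split; auto.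
    apply in_map_iff; exists w; split; auto. now apply In_words.
Qed.

Lemma finite_union {A B : Type} (T : list A) (P : A -> B -> Prop) :
  (forall t, In t T -> exists l, forall v, P t v -> In v l) ->
  exists L, forall t v, In t T -> P t v -> In v L.
Proof.
  induction T as [|t T IH]; intros Hfin; [exists nil; intros t v []|].
  destruct IH as [L HL]; [intros s Hs; apply Hfin; now right|].
  destruct (Hfin t (or_introl eq_refl)) as [l Hl].
  exists (l ++ L); intros s v [<-|Hs] Hv; apply in_or_app; eauto.
Qed.

Lemma dist_spec (M : monoid) (X : list M) x y :
  (exists d, Defs.dist M X x y = Finite (INR d) /\ near M X x y d /\
     forall n, near M X x y n -> (d <= n)%nat) \/
  (Defs.dist M X x y = p_infty /\ forall n, ~ near M X x y n).
Proof.
  destruct (classic (exists n, near M X x y n)) as [Hex|Hno]; [left|right].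
  - destruct (dec_inh_nat_subset_has_unique_least_element _ (fun n => classic _) Hex)
      as [d [[Hd Hmin] _]].
    exists d; split; [|split; assumption]. apply Rbar_is_glb_unique; split.
    + intros r [w [Hw [Hy ->]]]; simpl; apply le_INR, Hmin; exists w; auto.
    + intros b Hb; apply Hb. destruct Hd as [w [Hw [Hl Hy]]]; exists w; repeat split; auto.
      f_equal; f_equal; apply Nat.le_antisymm; [apply Hmin; exists w; auto|exact Hl].
  - split; [|intros n Hn; apply Hno; now exists n].
    apply Rbar_is_glb_unique; split; [|intros b _; destruct b; simpl; auto].
    intros r [w [Hw [Hy ->]]]; exfalso; apply Hno; exists (length w), w; auto.
Qed.

Lemma dist_le_of_near (M : monoid) (X : list M) x y n :
  near M X x y n -> Rbar_le (Defs.dist M X x y) (Finite (INR n)).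
Proof.
  intros Hn; destruct (dist_spec M X x y) as [[d [-> [_ Hmin]]]|[_ Hno]];
    [simpl; now apply le_INR, Hmin|now destruct (Hno n)].
Qed.

Lemma near_of_dist_le (M : monoid) (X : list M) x y r n :
  Rbar_le (Defs.dist M X x y) (Finite r) -> r <= INR n -> near M X x y n.
Proof.
  destruct (dist_spec M X x y) as [[d [-> [Hd _]]]|[-> _]]; simpl; [|tauto].
  intros Hdr Hrn; apply (near_le M X _ _ _ _ Hd), INR_le; lra.
Qed.

Definition coarse_equivalence (M N : monoid) (X : list M) (Y : list N)
  (f : M -> N) (g : N -> M) (A B Mu : nat) : Prop :=
  (forall x y n, near M X x y n -> near N Y (f x) (f y) (A * n + B)) /\
  (forall x y n, near N Y (f x) (f y) n -> near M X x y (A * n + B)) /\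
  (forall n, near N Y n (f (g n)) Mu /\ near N Y (f (g n)) n Mu).

Lemma coarse_equivalence_sym M N X Y f g A B Mu :
  coarse_equivalence M N X Y f g A B Mu ->
  exists A' B' Mu', coarse_equivalence N M Y X g f A' B' Mu'.
Proof.
  intros [f_near [near_of_f fg_near]].
  exists A, (A * (2 * Mu) + B + 2 * Mu)%nat, (A * Mu + B)%nat; split; [|split].
  - intros n m k Hk.
    assert (H : near N Y (f (g n)) (f (g m)) (Mu + k + Mu)).
    { eapply near_trans; [eapply near_trans|]; [apply fg_near|exact Hk|apply fg_near]. }
    eapply near_le; [apply near_of_f, H|nia].
  - intros n m k Hk.
    assert (H : near N Y n m (Mu + (A * k + B) + Mu)).
    { eapply near_trans; [eapply near_trans|]; [apply fg_near|apply f_near, Hk|apply fg_near]. }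
    eapply near_le; [exact H|nia].
  - intros x; split; apply near_of_f, fg_near.
Qed.

Lemma quasi_isometry_coarse_equivalence M N X Y f : quasi_isometry M N X Y f ->
  exists g A B Mu, coarse_equivalence M N X Y f g A B Mu.
Proof.
  intros [lam [eps [mu [Hlam [Heps [Hmu [Hd Hs]]]]]]].
  destruct (INR_unbounded lam) as [A HA], (INR_unbounded (lam * eps + eps)) as [B HB],
    (INR_unbounded mu) as [Mu HMu].
  destruct (functional_choice (fun n x => near N Y n (f x) Mu /\ near N Y (f x) n Mu))
    as [g Hg].
  { intros n; destruct (Hs n) as [x [H1 H2]]; exists x.
    split; eapply near_of_dist_le; eauto; lra. }
  exists g, A, B, Mu; split; [|split; [|exact Hg]].
  - intros x y n Hn; destruct (dist_spec M X x y) as [[d [Hdist [_ Hmin]]]|[_ Hno]];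
      [|now destruct (Hno n)].
    apply (near_of_dist_le N Y _ _ (lam * INR d + eps)).
    + destruct (Hd x y) as [_ Hup]; now rewrite Hdist in Hup.
    + pose proof (le_INR _ _ (Hmin n Hn)); pose proof (pos_INR d).
      rewrite plus_INR, mult_INR; nra.
  - intros x y m Hm; pose proof (dist_le_of_near _ _ _ _ _ Hm) as Hfm.
    destruct (Hd x y) as [Hlow _].
    destruct (dist_spec M X x y) as [[d [Hdist [Hnd _]]]|[Hdist _]]; rewrite Hdist in Hlow.
    + pose proof (Rbar_le_trans _ _ _ Hlow Hfm) as Hdm; simpl in Hdm.
      apply (near_le M X _ _ _ _ Hnd), INR_le.
      assert (INR d <= lam * (INR m + eps)).
      { replace (INR d) with (lam * (/ lam * INR d)) by (field; lra).
        apply Rmult_le_compat_l; lra. }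
      pose proof (pos_INR m); rewrite plus_INR, mult_INR; nra.
    + assert (Hinv : Rbar_lt 0 (Finite (/ lam))) by (simpl; apply Rinv_0_lt_compat; lra).
      rewrite Rbar_mult_comm, (is_Rbar_mult_unique _ _ _ (is_Rbar_mult_p_infty_pos _ Hinv))
        in Hlow.
      exact (False_ind _ (Rbar_le_trans _ _ _ Hlow Hfm)).
Qed.

Section CayleyGraph.
Variables (M : monoid) (X : list M).

Lemma adj_minus_sym F u v : adj_minus M X F u v -> adj_minus M X F v u.
Proof. intros [Hu [Hv [a [Ha Hd]]]]; repeat split; auto. exists a; split; tauto. Qed.

Lemma linked_sym F u v : linked M X F u v -> linked M X F v u.
Proof.
  induction 1; [apply rt_step, adj_minus_sym; auto|apply rt_refl|eapply rt_trans; eauto].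
Qed.

Lemma linked_antimono F E u v :
  (forall z, In z F -> In z E) -> linked M X E u v -> linked M X F u v.
Proof.
  intros HFE; induction 1 as [u v [Hu [Hv Hadj]]| |]; [|apply rt_refl|eapply rt_trans; eauto].
  apply rt_step; repeat split; auto.
Qed.

(* Every vertex on the path spelled by a witnessing word reaches [y] within
   [n] steps, so the hypothesis keeps that path off [F]. *)
Lemma linked_of_near F x y n : near M X x y n ->
  (forall z, near M X z y n -> ~ In z F) -> linked M X F x y.
Proof.
  intros [w [Hw [Hn <-]]] Hfree; revert x Hw Hfree.
  induction w as [|a w IH]; intros x Hw Hfree; simpl in *.
  - rewrite munit_r; apply rt_refl.
  - assert (Ha : In a X) by (apply Hw; now left).
    assert (Hw' : word_over M X w) by (intros b Hb; apply Hw; now right).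
    rewrite massoc in *. apply rt_trans with (mop M x a).
    + apply rt_step; repeat split; [| |exists a; split; auto].
      * apply Hfree. exists (a :: w); repeat split; simpl; auto. now rewrite massoc.
      * apply Hfree. exists w; repeat split; auto; lia.
    + apply IH; [lia|auto|]. intros z Hz; apply Hfree; apply (near_le M X _ _ _ _ Hz); lia.
Qed.

Definition entries (E : list M) : list M :=
  munit M :: flat_map (fun e => map (mop M e) X) E.

(* Follow a word from [1] to [u]: after the last vertex of the walk lying in
   [E] comes an entry point, and from there on the walk avoids [E]. *)
Lemma linked_from_entry (HX : generates M X) E u : ~ In u E ->
  exists t, In t (entries E) /\ ~ In t E /\ linked M X E t u.
Proof.
  intros Hu.
  set (Q := fun y => In y E \/
         (~ In y E /\ exists t, In t (entries E) /\ ~ In t E /\ linked M X E t y)).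
  assert (Q_step : forall y a, In a X -> Q y -> Q (mop M y a)).
  { intros y a Ha Hy; destruct (classic (In (mop M y a) E)) as [Hya|Hya]; [now left|right].
    split; [exact Hya|]. destruct Hy as [Hy|[HyE [t [Ht [HtE Hty]]]]].
    - exists (mop M y a); repeat split; auto; [|apply rt_refl].
      right; apply in_flat_map; exists y; split; auto; now apply in_map.
    - exists t; repeat split; auto. eapply rt_trans; [exact Hty|].
      apply rt_step; repeat split; auto. exists a; split; auto. }
  assert (Q_word : forall w, word_over M X w -> forall x, Q x -> Q (mop M x (word_eval M w))).
  { induction w as [|a w IH]; intros Hw x Hx; simpl; [now rewrite munit_r|].
    rewrite massoc. apply IH; [intros b Hb; apply Hw; now right|].
    apply Q_step; auto. apply Hw; now left. }
  assert (Q_unit : Q (munit M)).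
  { destruct (classic (In (munit M) E)) as [H|H]; [now left|right; split; auto].
    exists (munit M); repeat split; auto; [now left|apply rt_refl]. }
  destruct (HX u) as [w [Hw ->]].
  destruct (Q_word w Hw _ Q_unit) as [HQ|[_ HQ]]; rewrite munit_l in HQ; [contradiction|exact HQ].
Qed.

End CayleyGraph.

Lemma linked_map (M N : monoid) (X : list M) (Y : list N) (E : list M) (F : list N)
  (h : M -> N) :
  (forall u v, ~ In u E -> ~ In v E -> near M X u v 1 -> linked N Y F (h u) (h v)) ->
  forall u v, linked M X E u v -> linked N Y F (h u) (h v).
Proof.
  intros Hedge; induction 1 as [u v [Hu [Hv [a [Ha [->| ->]]]]]| |];
    [| |apply rt_refl|eapply rt_trans; eauto].
  - apply Hedge; auto. now apply near_gen.
  - apply linked_sym, Hedge; auto. now apply near_gen.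
Qed.

(* Outside a finite [E], every component of the Cayley graph meets the finite
   set [entries E], so a component outside [F ⊆ E] splits into finitely many
   components outside [E]; if it is infinite, one of them must be. *)
Lemma infinite_subcomponent (M : monoid) (X : list M) (HX : generates M X) F E r :
  (forall z, In z F -> In z E) -> infinite_component M X F r ->
  exists u, conn_minus M X F r u /\ infinite_component M X E u.
Proof.
  intros HFE [HrF Hrinf]. apply NNPP; intros Hno. apply Hrinf.
  destruct (finite_union (entries M X E)
    (fun t v => ~ In t E /\ conn_minus M X F r t /\ conn_minus M X E t v)) as [L HL].
  { intros t _. destruct (classic (~ In t E /\ conn_minus M X F r t)) as [[HtE Hrt]|Ht].
    - apply NNPP; intros Htinf. apply Hno; exists t; split; [exact Hrt|split; [exact HtE|]].
      intros [l Hl]; apply Htinf; exists l; intros v [_ [_ Htv]]; now apply Hl.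
    - exists nil; intros v [HtE [Hrt _]]; tauto. }
  exists (E ++ L); intros v [_ [HvF Hrv]]; apply in_or_app.
  destruct (classic (In v E)) as [HvE|HvE]; [now left|right].
  destruct (linked_from_entry M X HX E v HvE) as [t [Ht [HtE Htv]]].
  apply (HL t v Ht); repeat split; auto.
  eapply rt_trans; [exact Hrv|]. apply linked_sym, (linked_antimono M X F E); auto.
Qed.

Section CoarseTransfer.
Variables (M N : monoid) (X : list M) (Y : list N) (f : M -> N) (g : N -> M) (A B Mu : nat).
Hypothesis Hfg : coarse_equivalence M N X Y f g A B Mu.
Let f_near := proj1 Hfg.
Let near_of_f := proj1 (proj2 Hfg).
Let fg_near := proj2 (proj2 Hfg).
Variable F : list M.

(* [L] and [K] bound the lengths of the g-images of edges and of the words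
   from [u] to [g (f u)]; [R] keeps such paths off [F], and [R'] keeps the
   f-images of edges outside [E] off [F']. *)
Let K := (A * Mu + B)%nat.
Let L := (A * (Mu + 1 + Mu) + B)%nat.
Let R := (A * (K + L) + B + Mu)%nat.
Let R' := (A * (R + (A * 1 + B)) + B)%nat.
Let F' := ball N Y (map f F) R.
Let E := ball M X F R'.

Lemma F_incl_E z : In z F -> In z E.
Proof. intros Hz; apply In_ball; exists z; split; auto; eapply near_le; [apply near_refl|lia]. Qed.

Lemma In_F'_of_near_g z m n : In z F -> near M X z (g m) n -> (A * n + B + Mu <= R)%nat ->
  In m F'.
Proof.
  intros Hz Hzm Hn; apply In_ball; exists (f z); split; [now apply in_map|].
  eapply near_le; [eapply near_trans; [apply f_near, Hzm|apply fg_near]|exact Hn].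
Qed.

Lemma g_linked n m : linked N Y F' n m -> linked M X F (g n) (g m).
Proof.
  apply linked_map; intros n' m' _ Hm' Hnm'.
  assert (Hg : near M X (g n') (g m') L).
  { apply near_of_f.
    eapply near_trans; [eapply near_trans|]; [apply fg_near|exact Hnm'|apply fg_near]. }
  apply (linked_of_near M X _ _ _ _ Hg); intros z Hz HzF.
  apply Hm', (In_F'_of_near_g z m' L); auto. unfold R; nia.
Qed.

Lemma linked_gf u : ~ In (f u) F' -> linked M X F u (g (f u)).
Proof.
  intros Hu; assert (Hgf : near M X u (g (f u)) K) by apply near_of_f, fg_near.
  apply (linked_of_near M X _ _ _ _ Hgf); intros z Hz HzF.
  apply Hu, (In_F'_of_near_g z (f u) K); auto. unfold R; nia.
Qed.

Lemma In_E_of_near_F' p v n : In p F' -> near N Y p (f v) n -> (A * (R + n) + B <= R')%nat ->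
  In v E.
Proof.
  intros Hp Hpv Hn; apply In_ball in Hp; destruct Hp as [fz [Hfz Hzp]].
  apply in_map_iff in Hfz; destruct Hfz as [z [<- Hz]].
  apply In_ball; exists z; split; auto.
  eapply near_le; [apply near_of_f, (near_trans _ _ _ _ _ _ _ Hzp Hpv)|exact Hn].
Qed.

Lemma f_notin_F' u : ~ In u E -> ~ In (f u) F'.
Proof.
  intros Hu Hfu; apply Hu, (In_E_of_near_F' (f u) u 0); auto; [apply near_refl|unfold R'; nia].
Qed.

Lemma f_linked u v : linked M X E u v -> linked N Y F' (f u) (f v).
Proof.
  apply linked_map; intros u' v' _ Hv' Huv'.
  apply (linked_of_near N Y _ _ _ _ (f_near _ _ _ Huv')); intros p Hp HpF'.
  now apply Hv', (In_E_of_near_F' p v' (A * 1 + B)).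
Qed.

Lemma f_preimage_finite (l : list N) : exists L0, forall v, In (f v) l -> In v L0.
Proof.
  destruct (finite_union l (fun n v => f v = n)) as [L0 HL0]; [|now exists L0; eauto].
  intros n _; destruct (classic (exists x0, f x0 = n)) as [[x0 <-]|Hn].
  - exists (ball M X (x0 :: nil) B); intros v Hv; apply In_ball; exists x0; split; [now left|].
    replace B with (A * 0 + B)%nat by lia. apply near_of_f; rewrite Hv; apply near_refl.
  - exists nil; intros v Hv; apply Hn; eauto.
Qed.

Lemma f_infinite_component u : infinite_component M X E u -> infinite_component N Y F' (f u).
Proof.
  intros [HuE Huinf]; split; [now apply f_notin_F'|]; intros [l Hl].
  destruct (f_preimage_finite l) as [L0 HL0]; apply Huinf; exists L0.
  intros v [_ [HvE Huv]]; apply HL0, Hl.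
  repeat split; [now apply f_notin_F'|now apply f_notin_F'|now apply f_linked].
Qed.

Lemma at_least_inf_components_image (HX : generates M X) k :
  at_least_inf_components M X F k -> at_least_inf_components N Y F' k.
Proof.
  intros [reps [Hinf Hdis]].
  destruct (functional_choice (fun i u => (i < k)%nat ->
      conn_minus M X F (reps i) u /\ infinite_component M X E u)) as [u Hu].
  { intros i; destruct (classic (i < k)%nat) as [Hi|Hi].
    - destruct (infinite_subcomponent M X HX F E (reps i) F_incl_E (Hinf i Hi)) as [u Hu].
      now exists u.
    - exists (munit M); intros; contradiction. }
  exists (fun i => f (u i)); split.
  - intros i Hi; apply f_infinite_component, Hu, Hi.
  - intros i j Hi Hj Hij [Hfi [Hfj Hij']].
    destruct (Hu i Hi) as [[Hri [_ Hrui]] _], (Hu j Hj) as [[Hrj [_ Hruj]] _].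
    apply (Hdis i j Hi Hj Hij); repeat split; auto.
    apply rt_trans with (u i); [exact Hrui|].
    apply rt_trans with (g (f (u i))); [now apply linked_gf|].
    apply rt_trans with (g (f (u j))); [now apply g_linked|].
    apply linked_sym; apply rt_trans with (u j); [exact Hruj|now apply linked_gf].
Qed.

End CoarseTransfer.

Lemma Rbar_lub_is_lub (S : Rbar -> Prop) : Rbar_is_lub S (Rbar_lub S).
Proof. unfold Rbar_lub; now destruct (Rbar_ex_lub S). Qed.

Lemma num_ends_le (M N : monoid) (X : list M) (Y : list N) :
  (forall F, exists F', forall k,
     at_least_inf_components M X F k -> at_least_inf_components N Y F' k) ->
  Rbar_le (num_ends M X) (num_ends N Y).
Proof.
  intros Htransfer; apply (proj2 (Rbar_lub_is_lub _)); intros r [F ->].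
  apply (proj2 (Rbar_lub_is_lub _)); intros r [k [Hk ->]].
  destruct (Htransfer F) as [F' HF'].
  apply Rbar_le_trans with (num_inf_components N Y F');
    apply (proj1 (Rbar_lub_is_lub _)); [exists k; auto|now exists F'].
Qed.

Theorem theorem7p2 (M N : monoid) (X : list M) (Y : list N)
  (HX : generates M X) (HY : generates N Y)
  (Hqi : quasi_isometric M N X Y) :
  num_ends M X = num_ends N Y.
Proof.
  destruct Hqi as [f Hf].
  destruct (quasi_isometry_coarse_equivalence _ _ _ _ _ Hf) as [g [A [B [Mu Hfg]]]].
  destruct (coarse_equivalence_sym _ _ _ _ _ _ _ _ _ Hfg) as [A' [B' [Mu' Hgf]]].
  apply Rbar_le_antisym; apply num_ends_le.
  - intros F; eexists; exact (at_least_inf_components_image _ _ _ _ _ _ _ _ _ Hfg F HX).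
  - intros F; eexists; exact (at_least_inf_components_image _ _ _ _ _ _ _ _ _ Hgf F HY).
Qed.
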